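(* Let $G$ be countably infinite and let $L:G\to[0,\infty)$ be proper. (1) If $G$ has polynomial H-growth with respect to $L$, then there exists $s_0>0$ such that $(G,\sigma)$ is $(1+L)^{s_0}$-decaying for every normalized 2-cocycle $\sigma$ (in particular, if $L$ is a length function, $G$ has the $\sigma$-twisted rapid decay property w.r.t. $L$). (2) If $G$ has subexponential H-growth with respect to $L$, then $(G,\sigma)$ is $a^L$-decaying for every $a>1$ and every normalized 2-cocycle $\sigma$.
   Context: $G$ is a discrete group, $\sigma:G\times G\to\mathbb{T}$ a normalized 2-cocycle ($\sigma(g,h)\sigma(gh,k)=\sigma(h,k)\sigma(g,hk)$, $\sigma(g,e)=\sigma(e,g)=1$), $\Lambda_\sigma(g)$ the unitary on $\ell^2(G)$ with $(\Lambda_\sigma(g)\xi)(h)=\sigma(g,g^{-1}h)\xi(g^{-1}h)$, $\lambda=\Lambda_1$, $C^*_r(G,\sigma)$ the operator-norm closed $*$-algebra generated by $\Lambda_\sigma(G)$. $\mathcal{K}(G)$ = finitely supported functions, $\pi_\sigma(f)=\sum_g f(g)\Lambda_\sigma(g)$, $\pi_\lambda=\pi_1$. A function $L:G\to[0,\infty)$ is proper if $L^{-1}([0,t])$ is finite for all $t\ge0$. For finite nonempty $E\subseteq G$, the Haagerup content is $c(E)=\sup\{\|\pi_\lambda(f)\|\mid f\in\mathcal{K}(G),\ \mathrm{supp}f\subseteq E,\ \|f\|_2=1\}$. With $B_{r,L}=\{g\in G\mid L(g)\le r\}$: $G$ has polynomial H-growth w.r.t. $L$ if there are $K,p>0$ with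 $c(B_{r,L})\le K(1+r)^p$ for all $r\ge0$; $G$ has subexponential H-growth w.r.t. $L$ if for every $b>1$ there is $r_0$ with $c(B_{r,L})<b^r$ for all $r\ge r_0$. For $\kappa:G\to[1,\infty)$, $\|\xi\|_{2,\kappa}=\|\xi\kappa\|_2$; $(G,\sigma)$ is $\kappa$-decaying if $f\mapsto\pi_\sigma(f)$ is bounded from $(\mathcal{K}(G),\|\cdot\|_{2,\kappa})$ to $C^*_r(G,\sigma)$ with operator norm. A length function satisfies $L(e)=0$, $L(g^{-1})=L(g)$, $L(gh)\le L(g)+L(h)$; $G$ has the $\sigma$-twisted rapid decay property w.r.t. a length function $L$ if $(G,\sigma)$ is $(1+L)^{s}$-decaying for some $s>0$. *)

From HB Require Import structures.
From mathcomp Require Import all_boot all_order all_algebra.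
From mathcomp Require Import all_classical all_reals all_analysis.
From mathcomp Require Import complex.
Set Implicit Arguments. Unset Strict Implicit. Unset Printing Implicit Defensive.
Import Order.TTheory GRing.Theory Num.Theory.
Local Open Scope classical_set_scope.
Local Open Scope ring_scope.

Section Defs.
Variables (R : realType) (G : groupType).
Local Notation C := R[i].

Definition countably_infinite : Prop := exists e : nat -> G, bijective e.

Definition supp (f : G -> C) : set G := [set g | f g != 0].
Definition finsupp (f : G -> C) : Prop := finite_set (supp f).

Definition cocycle (sigma : G -> G -> C) : Prop :=
  [/\ (forall g h, Normc.normc (sigma g h) = 1),
      (forall g h k, sigma g h * sigma (g * h)%g k = sigma h k * sigma g (h * k)%g) &
      (forall g, sigma g 1%g = 1 /\ sigma 1%g g = 1)].

(* trivial cocycle, giving the left regular representation lambda *)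
Definition trivial_cocycle : G -> G -> C := fun _ _ => 1.

Definition l2sq (xi : G -> C) : \bar R :=
  \esum_(g in [set: G]) ((Normc.normc (xi g)) ^+ 2)%:E.
Definition is_l2 (xi : G -> C) : Prop := (l2sq xi < +oo)%E.
Definition l2norm (xi : G -> C) : \bar R :=
  match l2sq xi with
  | EFin r => (Num.sqrt r)%:E
  | _ => +oo%E
  end.

Definition Lambda (sigma : G -> G -> C) (g : G) (xi : G -> C) : G -> C :=
  fun h => sigma g (g^-1 * h)%g * xi (g^-1 * h)%g.

Definition pi (sigma : G -> G -> C) (f : G -> C) (xi : G -> C) : G -> C :=
  fun h => \sum_(g \in supp f) f g * Lambda sigma g xi h.

Definition opnorm (sigma : G -> G -> C) (f : G -> C) : \bar R :=
  ereal_sup [set l2norm (pi sigma f xi) |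
             xi in [set xi | is_l2 xi /\ (l2norm xi <= 1)%E]].

Definition haagerup (E : set G) : \bar R :=
  ereal_sup [set opnorm trivial_cocycle f |
             f in [set f | finsupp f /\ supp f `<=` E /\ l2norm f = 1%E]].

Definition properL (L : G -> R) : Prop :=
  forall t : R, 0 <= t -> finite_set [set g | L g <= t].

Definition ballL (L : G -> R) (r : R) : set G := [set g | L g <= r].

Definition poly_Hgrowth (L : G -> R) : Prop :=
  exists K p : R, [/\ 0 < K, 0 < p &
    forall r : R, 0 <= r -> (haagerup (ballL L r) <= (K * (1 + r) `^ p)%:E)%E].

Definition subexp_Hgrowth (L : G -> R) : Prop :=
  forall b : R, 1 < b -> exists r0 : R,
    forall r : R, r0 <= r -> (haagerup (ballL L r) < (b `^ r)%:E)%E.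

Definition decaying (sigma : G -> G -> C) (kappa : G -> R) : Prop :=
  exists K : R, forall f : G -> C, finsupp f ->
    (opnorm sigma f <= K%:E * l2norm (fun g => (f g * ((kappa g)%:C)%C)%R))%E.

Definition length_function (L : G -> R) : Prop :=
  [/\ L 1%g = 0, (forall g, L g^-1%g = L g) &
      (forall g h, L (g * h)%g <= L g + L h)].

Definition twisted_RD (sigma : G -> G -> C) (L : G -> R) : Prop :=
  exists s : R, 0 < s /\ decaying sigma (fun g => (1 + L g) `^ s).

End Defs.

(* Split a finitely supported f into shells f_n = f 1_{nu = n}, where the level nu g is
   essentially L g, so that f_n is supported in a ball E_n.  Since |sigma| = 1, we have
   |pi_sigma(f) xi| <= sum_n pi_lambda(|f_n|) |xi| pointwise, and the Haagerup content c_n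
   of E_n bounds the n-th term by c_n ||f_n||_2.  Cauchy-Schwarz with summable weights e_n
   then gives ||pi_sigma(f)|| <= sqrt(sum e_n) * sup_g (c_{nu g} / (sqrt(e_{nu g}) kappa g))
   * ||f kappa||_2.  With c_n ~ (1 + n)^p one takes e_n = 1 / ((n + 1)(n + 2)) and
   kappa = (1 + L)^(p + 1); with c_n <= b^n for b < a one takes e_n = (b / a)^n and
   kappa = a^L. *)
From Pilot Require Import Defs.
From HB Require Import structures.
From mathcomp Require Import all_boot all_order all_algebra.
From mathcomp Require Import all_classical all_reals all_analysis.
From mathcomp Require Import complex.
From mathcomp Require Import ring lra.
Import Order.TTheory GRing.Theory Num.Theory.
Set Implicit Arguments. Unset Strict Implicit. Unset Printing Implicit Defensive.
Local Open Scope classical_set_scope.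
Local Open Scope ring_scope.

Section NormcFacts.
Variable R : realType.
Local Notation normc := (@Normc.normc R).
Local Open Scope complex_scope.

Lemma normc_ge0 (x : R[i]) : 0 <= normc x.
Proof. by case: x => a b; rewrite /= sqrtr_ge0. Qed.

Lemma normc_real (x : R) : 0 <= x -> normc x%:C = x.
Proof. by move=> x0; rewrite /Normc.normc /= expr0n /= addr0 sqrtr_sqr ger0_norm. Qed.

Lemma normc_sum_le (I : Type) (s : seq I) (F : I -> R[i]) :
  normc (\sum_(i <- s) F i) <= \sum_(i <- s) normc (F i).
Proof.
elim: s => [|i s IH]; rewrite ?big_nil ?big_cons ?Normc.normc0 //.
by apply: le_trans (le_normcD _ _) _; rewrite lerD2l.
Qed.

End NormcFacts.

Section SumFacts.
Variable R : realType.

Lemma sum_partition_nat (I : eqType) (nu : I -> nat) (s : seq I) (N : nat) (F : I -> R) :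
  (forall i, i \in s -> (nu i < N)%N) ->
  \sum_(0 <= n < N) \sum_(i <- s | nu i == n) F i = \sum_(i <- s) F i.
Proof.
move=> ltN; under eq_bigr do rewrite big_mkcond.
rewrite exchange_big /= big_seq [RHS]big_seq; apply: eq_bigr => i si.
rewrite -big_mkcond /=; under eq_bigl do rewrite eq_sym.
by rewrite big_nat1_eq /= ltN.
Qed.

(* Cauchy-Schwarz for x_n = sqrt (e n) * (x_n / sqrt (e n)). *)
Lemma sqr_sum_le_weighted (N : nat) (x e : nat -> R) : (forall n, 0 < e n) ->
  (\sum_(0 <= n < N) x n) ^+ 2 <=
  (\sum_(0 <= n < N) e n) * \sum_(0 <= n < N) (x n ^+ 2 / e n).
Proof.
move=> e0; elim: N => [|N IH]; first by rewrite !big_geq // expr0n /= mul0r.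
rewrite !big_nat_recr //=; move: IH.
set X := \sum_(0 <= n < N) x n; set A := \sum_(0 <= n < N) e n.
set B := \sum_(0 <= n < N) (x n ^+ 2 / e n) => IH.
have A0 : 0 <= A by apply: sumr_ge0 => n _; apply: ltW.
have B0 : 0 <= B by apply: sumr_ge0 => n _; rewrite divr_ge0 ?sqr_ge0 // ltW.
have eN := e0 N; set y := x N / e N.
have -> : x N = e N * y by rewrite /y mulrC divfK // gt_eqF.
have -> : (e N * y) ^+ 2 / e N = e N * y ^+ 2 by field; rewrite gt_eqF.
suff : 2 * X * y <= A * y ^+ 2 + B by nra.
have [A_eq0|A_neq0] := eqVneq A 0.
  have X0 : X = 0 by move: IH; rewrite A_eq0 mul0r; nra.
  by rewrite X0 A_eq0; lra.
have Apos : 0 < A by rewrite lt_def A_neq0 A0.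
have : 0 <= A * (A * y ^+ 2 + B - 2 * X * y).
  have -> : A * (A * y ^+ 2 + B - 2 * X * y) = (A * y - X) ^+ 2 + (A * B - X ^+ 2)
    by ring.
  by rewrite addr_ge0 ?sqr_ge0 ?subr_ge0.
by rewrite pmulr_rge0 //; lra.
Qed.

Lemma sum_telescope_inv (N : nat) :
  \sum_(0 <= n < N) (n.+1%:R * n.+2%:R)^-1 = 1 - (N.+1%:R)^-1 :> R.
Proof.
elim: N => [|N IH]; first by rewrite big_geq // invr1 subrr.
rewrite big_nat_recr //= IH -[N.+2]addn1 -[N.+1]addn1 !natrD.
by field; have := ler0n R N; rewrite !gt_eqF //; lra.
Qed.

Lemma sum_geom_mul (q : R) (N : nat) :
  (\sum_(0 <= n < N) q ^+ n) * (1 - q) = 1 - q ^+ N.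
Proof.
elim: N => [|N IH]; first by rewrite big_geq // mul0r expr0 subrr.
by rewrite big_nat_recr //= mulrDl IH exprSr; ring.
Qed.

End SumFacts.

Lemma esumZl_le (R : realType) (T : choiceType) (I : set T) (a : T -> \bar R) (c : R) :
  (forall i, (0 <= a i)%E) -> 0 <= c ->
  (\esum_(i in I) (c%:E * a i) <= c%:E * \esum_(i in I) a i)%E.
Proof.
move=> a0 c0; apply: ge_ereal_sup => _ [X [finX XI]] <-.
rewrite -ge0_mule_fsumr //; apply: lee_wpmul2l; first by rewrite lee_fin.
by apply: ereal_sup_ubound; exists X.
Qed.

Section ShellDecomposition.
Variables (R : realType) (G : groupType).
Local Notation C := R[i].
Local Notation normc := (@Normc.normc R).
Local Open Scope complex_scope.

Lemma l2sq_ge0 (xi : G -> C) : (0 <= l2sq xi)%E.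
Proof. by apply: esum_ge0 => g _; rewrite lee_fin exprn_ge0 ?normc_ge0. Qed.

Lemma l2sq_seq (s : seq G) (xi : G -> C) : uniq s -> (forall g, g \notin s -> xi g = 0) ->
  l2sq xi = (\sum_(g <- s) normc (xi g) ^+ 2)%:E.
Proof.
move=> us xi_s; rewrite /l2sq.
transitivity (\esum_(g in [set` s]) ((normc (xi g)) ^+ 2)%:E)%E.
  rewrite [RHS]esum_mkcond; apply: eq_esum => g _; rewrite mem_setE.
  by case: ifPn => // /xi_s ->; rewrite Normc.normc0 expr0n.
rewrite esum_fset; first by rewrite -fsbig_seq // sumEFin.
  exact: finite_seq.
by move=> g _; rewrite lee_fin exprn_ge0 ?normc_ge0.
Qed.

Lemma l2norm_le_sqrt (xi : G -> C) (x : R) : 0 <= x -> (l2sq xi <= x%:E)%E ->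
  (l2norm xi <= (Num.sqrt x)%:E)%E.
Proof.
move=> x0; rewrite /l2norm; have := l2sq_ge0 xi.
by case: (l2sq xi) => [r| |] //= r0; rewrite !lee_fin => rx; rewrite ler_sqrt.
Qed.

Lemma l2sq_le_sqr (xi : G -> C) (x : R) : 0 <= x -> (l2norm xi <= x%:E)%E ->
  (l2sq xi <= (x ^+ 2)%:E)%E.
Proof.
move=> x0; rewrite /l2norm; have := l2sq_ge0 xi.
case: (l2sq xi) => [r| |] //=; rewrite !lee_fin => r0 rx.
by rewrite -(sqr_sqrtr r0) ler_sqr ?nnegrE ?sqrtr_ge0.
Qed.

Lemma finsupp_seq (f : G -> C) : finsupp f ->
  exists2 s : seq G, uniq s & forall g, g \notin s -> f g = 0.
Proof.
move=> finf; exists (finmap.enum_fset (fset_set (supp f))); first exact: finmap.fset_uniq.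
move=> g; rewrite (in_fset_set finf) /supp notin_setE /= => /negP.
by rewrite negbK => /eqP.
Qed.

Lemma pi_seq (sigma : G -> G -> C) (f xi : G -> C) (s : seq G) h : uniq s ->
  (forall g, g \notin s -> f g = 0) ->
  Defs.pi sigma f xi h = \sum_(g <- s) f g * Lambda sigma g xi h.
Proof.
move=> us f_s; rewrite /Defs.pi (fsbig_fwiden s) //.
  move=> g /=; rewrite /supp /= => fg; apply: contraNT fg => /f_s ->; exact: eqxx.
move=> g [_]; rewrite /supp /= => /negP; rewrite negbK => /eqP ->.
by rewrite mul0r.
Qed.

Lemma l2norm_pi_le_haagerup (E : set G) (f xi : G -> C) :
  finsupp f -> supp f `<=` E -> l2norm f = 1%E -> is_l2 xi -> (l2norm xi <= 1)%E ->
  (l2norm (Defs.pi (@trivial_cocycle R G) f xi) <= haagerup R E)%E.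
Proof.
move=> finf fE f1 xil2 xi1.
apply: (@le_trans _ _ (opnorm (@trivial_cocycle R G) f)).
  by apply: ereal_sup_ubound; exists xi.
by apply: ereal_sup_ubound; exists f.
Qed.

(* Haagerup content bounds pi_lambda(f) only for unit vectors f: rescale f by its norm. *)
Lemma l2sq_pi_trivial_le (E : set G) (c : R) (s : seq G) (f xi : G -> C) :
  uniq s -> (forall g, g \notin s -> f g = 0) -> supp f `<=` E ->
  (haagerup R E <= c%:E)%E -> 0 <= c -> is_l2 xi -> (l2norm xi <= 1)%E ->
  (l2sq (Defs.pi (@trivial_cocycle R G) f xi) <=
     (c ^+ 2 * \sum_(g <- s) normc (f g) ^+ 2)%:E)%E.
Proof.
move=> us f_s fE Ec c0 xil2 xi1.
set T := \sum_(g <- s) normc (f g) ^+ 2.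
have T0 : 0 <= T by apply: sumr_ge0 => g _; rewrite sqr_ge0.
have [T_eq0|T_neq0] := eqVneq T 0.
  have f0 g : f g = 0.
    have [gs|/f_s //] := boolP (g \in s).
    have : normc (f g) ^+ 2 <= T.
      by rewrite /T (bigD1_seq g) //= lerDl sumr_ge0 // => i _; rewrite sqr_ge0.
    rewrite T_eq0 => fg; apply: Normc.eq0_normc; apply/eqP.
    by rewrite -sqrf_eq0 eq_le fg sqr_ge0.
  rewrite T_eq0 mulr0 (@l2sq_seq [::]) ?big_nil // => h _.
  by rewrite (pi_seq _ _ _ us f_s) big1 // => g _; rewrite f0 mul0r.
set t := Num.sqrt T.
have t_gt0 : 0 < t by rewrite sqrtr_gt0 lt_def T_neq0 T0.
set fu : G -> C := fun g => f g / t%:C.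
have fu_s g : g \notin s -> fu g = 0 by move/f_s; rewrite /fu => ->; rewrite mul0r.
have normc_fu g : normc (fu g) = normc (f g) / t.
  by rewrite Normc.normcM Normc.normcV normc_real // ltW.
have fu1 : l2norm fu = 1%E.
  rewrite /l2norm (l2sq_seq us fu_s).
  under eq_bigr do rewrite normc_fu expr_div_n.
  by rewrite -mulr_suml sqr_sqrtr // divff // sqrtr1.
have fuE : supp fu `<=` E.
  by move=> g; rewrite /supp /= /fu mulf_eq0 negb_or => /andP[/fE].
have finfu : finsupp fu.
  apply: (@sub_finite_set _ _ [set` s]); last exact: finite_seq.
  by move=> g; rewrite /supp /=; apply: contraNT => /fu_s ->.
have pi_fu h : Defs.pi (@trivial_cocycle R G) f xi h =
               t%:C * Defs.pi (@trivial_cocycle R G) fu xi h.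
  rewrite !(pi_seq _ _ _ us) // mulr_sumr; apply: eq_bigr => g _.
  have tC_neq0 : t%:C != 0 by rewrite eq_complex /= negb_and gt_eqF.
  by rewrite /fu [RHS]mulrA [t%:C * _]mulrC divfK.
have := l2sq_le_sqr c0 (le_trans (l2norm_pi_le_haagerup finfu fuE fu1 xil2 xi1) Ec).
move=> le_fu; rewrite -[T](sqr_sqrtr T0) -/t mulrC EFinM.
apply: le_trans (lee_wpmul2l _ le_fu); last by rewrite lee_fin sqr_ge0.
rewrite EFinM; apply: le_trans (esumZl_le _ _ _); last exact: sqr_ge0.
  by apply: le_esum => h _; rewrite pi_fu Normc.normcM normc_real ?(ltW t_gt0) // exprMn EFinM.
by move=> h; rewrite lee_fin sqr_ge0.
Qed.

Section Shells.
Variables (f xi : G -> C) (nu : G -> nat) (s : seq G).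
Hypotheses (us : uniq s) (f_s : forall g, g \notin s -> f g = 0).

Definition shell (n : nat) (h : G) : R :=
  \sum_(g <- s | nu g == n) normc (f g) * normc (xi (g^-1 * h)%g).

Lemma shell_ge0 n h : 0 <= shell n h.
Proof. by apply: sumr_ge0 => g _; rewrite mulr_ge0 ?normc_ge0. Qed.

Lemma normc_pi_le_shells (sigma : G -> G -> C) (N : nat) h :
  (forall g h, normc (sigma g h) = 1) -> (forall g, g \in s -> (nu g < N)%N) ->
  normc (Defs.pi sigma f xi h) <= \sum_(0 <= n < N) shell n h.
Proof.
move=> sigma1 ltN; rewrite (pi_seq _ _ _ us f_s) /shell sum_partition_nat //.
apply: le_trans (normc_sum_le _ _) _; apply: ler_sum => g _.
by rewrite /Lambda !Normc.normcM sigma1 mul1r.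
Qed.

Lemma sqr_normc_pi_le_shells (sigma : G -> G -> C) (N : nat) (e : nat -> R) (S : R) h :
  (forall g h, normc (sigma g h) = 1) -> (forall g, g \in s -> (nu g < N)%N) ->
  (forall n, 0 < e n) -> \sum_(0 <= n < N) e n <= S ->
  ((normc (Defs.pi sigma f xi h) ^+ 2)%:E <=
    \sum_(0 <= n < N) (S * (shell n h ^+ 2 / e n))%:E)%E.
Proof.
move=> sigma1 ltN e0 sumeS; rewrite sumEFin lee_fin.
apply: (@le_trans _ _ ((\sum_(0 <= n < N) shell n h) ^+ 2)).
  rewrite ler_sqr ?nnegrE ?normc_ge0 ?normc_pi_le_shells //.
  by apply: sumr_ge0 => n _; exact: shell_ge0.
apply: le_trans (sqr_sum_le_weighted _ _ e0) _.
rewrite -mulr_sumr ler_wpM2r // sumr_ge0 // => n _.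
by rewrite divr_ge0 ?sqr_ge0 ?ltW.
Qed.

(* The n-th shell is |pi_lambda(|f| 1_{nu = n}) |xi||, so Haagerup content controls it. *)
Lemma l2_shell_le (E : set G) (c : R) n :
  (forall g, nu g = n -> E g) -> (haagerup R E <= c%:E)%E -> 0 <= c ->
  is_l2 xi -> (l2norm xi <= 1)%E ->
  (\esum_(h in [set: G]) (shell n h ^+ 2)%:E <=
     (c ^+ 2 * \sum_(g <- s | nu g == n) normc (f g) ^+ 2)%:E)%E.
Proof.
move=> nuE Ec c0 xil2 xi1.
set fn : G -> C := fun g => if nu g == n then (normc (f g))%:C else 0.
set xa : G -> C := fun h => (normc (xi h))%:C.
have fn_s g : g \notin s -> fn g = 0.
  by move/f_s; rewrite /fn => ->; rewrite Normc.normc0; case: ifP.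
have fnE : supp fn `<=` E.
  move=> g; rewrite /supp /= /fn.
  by case: (eqVneq (nu g) n) => [nu_g _|_]; [exact: nuE | rewrite eqxx].
have l2sq_xa : l2sq xa = l2sq xi.
  by apply: eq_esum => h _; rewrite normc_real ?normc_ge0.
have xal2 : is_l2 xa by rewrite /is_l2 l2sq_xa.
have xa1 : (l2norm xa <= 1)%E by rewrite /l2norm l2sq_xa.
have pi_fn h : Defs.pi (@trivial_cocycle R G) fn xa h = (shell n h)%:C.
  rewrite (pi_seq _ _ _ us fn_s) /shell rmorph_sum [RHS]big_mkcond /=.
  apply: eq_bigr => g _; rewrite /fn /Lambda /trivial_cocycle /xa.
  by case: ifP => _; rewrite ?mul0r // mul1r -rmorphM.
have -> : \sum_(g <- s | nu g == n) normc (f g) ^+ 2 = \sum_(g <- s) normc (fn g) ^+ 2.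
  rewrite big_mkcond; apply: eq_bigr => g _; rewrite /fn.
  by case: ifP => _; rewrite ?Normc.normc0 ?expr0n // normc_real ?normc_ge0.
apply: le_trans (l2sq_pi_trivial_le us fn_s fnE Ec c0 xal2 xa1).
by apply: le_esum => h _; rewrite pi_fn normc_real ?shell_ge0.
Qed.

Lemma l2_scaled_shell_le (E : set G) (c S e : R) n :
  (forall g, nu g = n -> E g) -> (haagerup R E <= c%:E)%E -> 0 <= c -> 0 <= S -> 0 <= e ->
  is_l2 xi -> (l2norm xi <= 1)%E ->
  (\esum_(h in [set: G]) (S * (shell n h ^+ 2 / e))%:E <=
     (S / e * (c ^+ 2 * \sum_(g <- s | nu g == n) normc (f g) ^+ 2))%:E)%E.
Proof.
move=> nuE Ec c0 S0 e0 xil2 xi1; have Se0 : 0 <= S / e by rewrite divr_ge0.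
rewrite (eq_esum (fun h _ => (_ : _ = (S / e)%:E * (shell n h ^+ 2)%:E)%E));
  last by move=> h; rewrite -EFinM mulrCA mulrC.
apply: le_trans (esumZl_le _ _ Se0) _; first by move=> h; rewrite lee_fin sqr_ge0.
rewrite [X in (_ <= X)%E]EFinM; apply: lee_wpmul2l; first by rewrite lee_fin.
exact: l2_shell_le nuE Ec c0 xil2 xi1.
Qed.

End Shells.

Lemma sum_shell_mass_le (f : G -> C) (kappa : G -> R) (nu : G -> nat) (s : seq G)
    (c e : nat -> R) (M : R) (N : nat) :
  (forall n, 0 < e n) -> (forall g, c (nu g) ^+ 2 <= M ^+ 2 * e (nu g) * kappa g ^+ 2) ->
  (forall g, g \in s -> (nu g < N)%N) ->
  \sum_(0 <= n < N) (c n ^+ 2 / e n * \sum_(g <- s | nu g == n) normc (f g) ^+ 2) <=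
  M ^+ 2 * \sum_(g <- s) normc (f g) ^+ 2 * kappa g ^+ 2.
Proof.
move=> e0 c_nu ltN.
rewrite (_ : \sum_(0 <= n < N) _ = \sum_(0 <= n < N) \sum_(g <- s | nu g == n)
                c (nu g) ^+ 2 / e (nu g) * normc (f g) ^+ 2); last first.
  by apply: eq_bigr => n _; rewrite mulr_sumr; apply: eq_bigr => g /eqP ->.
rewrite sum_partition_nat // mulr_sumr; apply: ler_sum => g _.
rewrite [X in _ <= X]mulrCA [X in _ <= X]mulrC ler_wpM2r ?sqr_ge0 // ler_pdivrMr //.
by rewrite mulrAC.
Qed.

Lemma decaying_of_shells (sigma : G -> G -> C) (kappa : G -> R) (nu : G -> nat)
    (E : nat -> set G) (c e : nat -> R) (S M : R) :
  (forall g h, normc (sigma g h) = 1) -> (forall g, 0 <= kappa g) ->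
  (forall g, E (nu g) g) -> (forall n, (haagerup R (E n) <= (c n)%:E)%E) ->
  (forall n, 0 <= c n) -> (forall n, 0 < e n) ->
  (forall N, \sum_(0 <= n < N) e n <= S) -> 0 <= M ->
  (forall g, c (nu g) ^+ 2 <= M ^+ 2 * e (nu g) * kappa g ^+ 2) ->
  decaying sigma kappa.
Proof.
move=> sigma1 kappa0 nuE Ec c0 e0 sumeS M0 c_nu.
have S0 : 0 <= S by have := sumeS 0%N; rewrite big_geq.
exists (Num.sqrt S * M) => f finf.
have [s us f_s] := finsupp_seq finf.
set T := \sum_(g <- s) normc (f g) ^+ 2 * kappa g ^+ 2.
have T0 : 0 <= T by apply: sumr_ge0 => g _; rewrite mulr_ge0 ?sqr_ge0.
have -> : l2norm (fun g => f g * (kappa g)%:C) = (Num.sqrt T)%:E.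
  rewrite /l2norm (l2sq_seq us); last by move=> g /f_s ->; rewrite mul0r.
  by congr (Num.sqrt _)%:E; apply: eq_bigr => g _; rewrite Normc.normcM normc_real // exprMn.
rewrite -EFinM; apply: ge_ereal_sup => _ [xi [xil2 xi1] <-].
suff : (l2sq (Defs.pi sigma f xi) <= (S * M ^+ 2 * T)%:E)%E.
  have STM0 : 0 <= S * M ^+ 2 * T by rewrite !mulr_ge0 ?sqr_ge0.
  move/(l2norm_le_sqrt STM0)/le_trans; apply.
  by rewrite !sqrtrM ?mulr_ge0 ?sqr_ge0 // -expr2 sqr_sqrtr.
set N := (\max_(g <- s) nu g).+1.
have ltN g : g \in s -> (nu g < N)%N by move=> gs; rewrite ltnS (leq_bigmax_seq _ gs).
have pi_le h := sqr_normc_pi_le_shells xi us f_s h sigma1 ltN e0 (sumeS N).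
rewrite /l2sq; apply: le_trans (le_esum (fun h _ => pi_le h)) _.
rewrite esum_sum; last first.
  by move=> h n _ _; rewrite lee_fin mulr_ge0 ?divr_ge0 ?sqr_ge0 ?(ltW (e0 n)).
apply: (@le_trans _ _ (\sum_(0 <= n < N)
   (S / e n * (c n ^+ 2 * \sum_(g <- s | nu g == n) normc (f g) ^+ 2))%:E)%E).
  apply: lee_sum => n _; apply: (l2_scaled_shell_le us f_s (E := E n)) => //.
  - by move=> g <-.
  - exact: ltW.
rewrite sumEFin lee_fin -mulrA.
have regroup n : S / e n * (c n ^+ 2 * \sum_(g <- s | nu g == n) normc (f g) ^+ 2) =
    S * (c n ^+ 2 / e n * \sum_(g <- s | nu g == n) normc (f g) ^+ 2).
  by ring.
under eq_bigr => n _ do rewrite regroup.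
by rewrite -mulr_sumr ler_wpM2l // sum_shell_mass_le.
Qed.

End ShellDecomposition.

Section Weights.
Variable R : realType.

Lemma sqr_le_mul_weight (c d e M k : R) : 0 <= c -> 0 <= d -> 0 < e -> 1 <= d ^+ 2 * e ->
  c * d <= M * k -> c ^+ 2 <= M ^+ 2 * e * k ^+ 2.
Proof.
move=> c0 d0 e0 de1 cd_le.
apply: (@le_trans _ _ (c ^+ 2 * (d ^+ 2 * e))); first by rewrite ler_peMr ?sqr_ge0.
have -> : c ^+ 2 * (d ^+ 2 * e) = (c * d) ^+ 2 * e by ring.
have -> : M ^+ 2 * e * k ^+ 2 = (M * k) ^+ 2 * e by ring.
rewrite ler_wpM2r ?(ltW e0) //.
have cd0 : 0 <= c * d by rewrite mulr_ge0.
by rewrite !expr2; nra.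
Qed.

Lemma poly_shell_weight (K p x : R) (n : nat) : 0 < K -> 0 < p -> 0 <= x ->
  n%:R <= x + 1 ->
  (K * (1 + n%:R) `^ p) ^+ 2 <=
    (3 * K * 2 `^ p) ^+ 2 * (n.+1%:R * n.+2%:R)^-1 * ((1 + x) `^ (p + 1)) ^+ 2.
Proof.
move=> K0 p0 x0 nx; have x1 : 0 < 1 + x by lra.
have n2 : n.+2%:R <= 3 * (1 + x) :> R by rewrite -addn2 natrD; lra.
have n1 : (1 + n%:R) `^ p <= 2 `^ p * (1 + x) `^ p.
  rewrite -powRM; [|lra|lra].
  by apply: ge0_ler_powR; rewrite ?nnegrE ?(ltW p0) //; lra.
have cd_le : K * (1 + n%:R) `^ p * n.+2%:R <= 3 * K * 2 `^ p * (1 + x) `^ (p + 1).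
  rewrite powRD ?(gt_eqF x1) ?implybT // powRr1 //; last exact: ltW.
  have -> : 3 * K * 2 `^ p * ((1 + x) `^ p * (1 + x)) =
    K * (2 `^ p * (1 + x) `^ p) * (3 * (1 + x)) by ring.
  by apply: ler_pM => //; rewrite ?mulr_ge0 ?powR_ge0 ?ler_wpM2l ?(ltW K0).
apply: sqr_le_mul_weight cd_le.
- by rewrite mulr_ge0 ?powR_ge0 // ltW.
- exact: ler0n.
- by rewrite invr_gt0 mulr_gt0 ?ltr0Sn.
- rewrite invfM mulrA expr2 mulrAC mulfK ?pnatr_eq0 //.
  by rewrite ler_pdivlMr ?ltr0Sn // mul1r ler_nat.
Qed.

Lemma exp_shell_weight (a b x : R) (N0 n : nat) : 1 < a -> 0 < b -> b <= a -> 0 <= x ->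
  n%:R <= x + 1 ->
  (b ^+ (N0 + n)) ^+ 2 <= (a * b ^+ N0) ^+ 2 * (b / a) ^+ n * (a `^ x) ^+ 2.
Proof.
move=> a1 b0 ba x0 nx; have a0 : 0 < a by lra.
set q := b / a; have q0 : 0 <= q by rewrite divr_ge0 ?ltW.
have q1 : q <= 1 by rewrite ler_pdivrMr // mul1r.
have -> : b ^+ (N0 + n) = b ^+ N0 * (q ^+ n * a ^+ n).
  by rewrite exprD -exprMn /q divfK ?gt_eqF.
have an : a ^+ n <= a * a `^ x.
  rewrite -powR_mulrn ?(ltW a0) //.
  rewrite -[X in X * _]powRr1 ?(ltW a0) //.
  rewrite -powRD; last by rewrite (gt_eqF a0) implybT.
  by rewrite ler_powR ?(ltW a1) // addrC.
have Qn1 : q ^+ n <= 1 by rewrite exprn_ile1.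
have Qn0 : 0 <= q ^+ n by rewrite exprn_ge0.
have An0 : 0 <= a ^+ n by rewrite exprn_ge0 ?ltW.
have -> : (a * b ^+ N0) ^+ 2 * q ^+ n * a `^ x ^+ 2 =
  (b ^+ N0) ^+ 2 * (q ^+ n * (a * a `^ x) ^+ 2) by ring.
rewrite [X in X <= _]exprMn ler_wpM2l ?sqr_ge0 // [X in X <= _]exprMn.
apply: ler_pM; rewrite ?sqr_ge0 //; first by rewrite expr2 ler_piMl.
by rewrite ler_sqr ?nnegrE ?mulr_ge0 ?powR_ge0 ?(ltW a0).
Qed.
End Weights.

Section Levels.
Variables (R : realType) (G : groupType) (L : G -> R).
Hypothesis L_ge0 : forall g, 0 <= L g.

(* Truncated subtraction: the level vanishes where L < N0. *)
Definition level (N0 : nat) (g : G) : nat := ((Num.truncn (L g)).+1 - N0)%N.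

Lemma mem_ball_level N0 g : ballL L (N0 + level N0 g)%:R g.
Proof.
rewrite /ballL /level /= -maxnE; apply: ltW; apply: lt_le_trans (truncnS_gt _) _.
by rewrite ler_nat leq_maxr.
Qed.

Lemma level_le N0 g : (level N0 g)%:R <= L g + 1.
Proof.
apply: le_trans (_ : (Num.truncn (L g)).+1%:R <= _); first by rewrite ler_nat leq_subr.
by rewrite -natr1 lerD2r truncn_le.
Qed.

Lemma decaying_of_poly_Hgrowth (sigma : G -> G -> R[i]) (K p : R) :
  cocycle sigma -> 0 < K -> 0 < p ->
  (forall r, 0 <= r -> (haagerup R (ballL L r) <= (K * (1 + r) `^ p)%:E)%E) ->
  decaying sigma (fun g => (1 + L g) `^ (p + 1)).
Proof.
move=> [sigma1 _ _] K0 p0 hK.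
apply: (@decaying_of_shells R G sigma _ (level 0) (fun n => ballL L n%:R)
  (fun n => K * (1 + n%:R) `^ p) (fun n => (n.+1%:R * n.+2%:R)^-1) 1 (3 * K * 2 `^ p)).
- exact: sigma1.
- by move=> g; apply: powR_ge0.
- by move=> g; have := mem_ball_level 0 g; rewrite add0n.
- by move=> n; apply: hK.
- by move=> n; rewrite mulr_ge0 ?powR_ge0 // ltW.
- by move=> n; rewrite invr_gt0 mulr_gt0 ?ltr0Sn.
- by move=> N; rewrite sum_telescope_inv gerBl invr_ge0.
- by rewrite !mulr_ge0 ?powR_ge0 // ltW.
- by move=> g; apply: poly_shell_weight; rewrite ?L_ge0 ?level_le.
Qed.

(* Spend half the room between 1 and a: the H-growth rate b = (1 + a) / 2 leaves the
   summable weights (b / a)^n. *)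
Lemma decaying_of_subexp_Hgrowth (sigma : G -> G -> R[i]) (a : R) :
  cocycle sigma -> 1 < a -> subexp_Hgrowth L -> decaying sigma (fun g => a `^ L g).
Proof.
move=> [sigma1 _ _] a1 hsub.
set b := (1 + a) / 2.
have b1 : 1 < b by rewrite /b; lra.
have ba : b <= a by rewrite /b; lra.
have [r0 hr0] := hsub b b1.
set N0 := (Num.truncn (Num.max r0 0)).+1.
have r0N0 : r0 <= N0%:R.
  by apply: le_trans (ltW (truncnS_gt _)); rewrite le_max lexx.
have a0 : 0 < a by lra.
have q0 : 0 < b / a by rewrite divr_gt0 //; lra.
have q1 : b / a < 1 by rewrite ltr_pdivrMr // mul1r /b; lra.
apply: (@decaying_of_shells R G sigma _ (level N0) (fun n => ballL L (N0 + n)%:R)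
  (fun n => b ^+ (N0 + n)) (fun n => (b / a) ^+ n) (1 - b / a)^-1 (a * b ^+ N0)).
- exact: sigma1.
- by move=> g; apply: powR_ge0.
- exact: mem_ball_level.
- move=> n; apply: ltW; rewrite -powR_mulrn; last lra.
  by apply: hr0; apply: le_trans r0N0 _; rewrite ler_nat leq_addr.
- by move=> n; rewrite exprn_ge0 //; lra.
- by move=> n; rewrite exprn_gt0.
- move=> N; rewrite -[(1 - _)^-1]mul1r ler_pdivlMr ?subr_gt0 // sum_geom_mul.
  by rewrite gerBl exprn_ge0 ?ltW.
- by rewrite mulr_ge0 ?exprn_ge0; lra.
- by move=> g; apply: exp_shell_weight; rewrite ?L_ge0 ?level_le //; lra.
Qed.

End Levels.

Theorem theorem3p13 (R : realType) (G : groupType) (L : G -> R) :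
  countably_infinite G -> (forall g, 0 <= L g) -> properL L ->
  (poly_Hgrowth L ->
     exists s0 : R, 0 < s0 /\
       (forall sigma : G -> G -> R[i], cocycle sigma ->
          decaying sigma (fun g => (1 + L g) `^ s0)) /\
       (length_function L ->
          forall sigma : G -> G -> R[i], cocycle sigma -> twisted_RD sigma L))
  /\
  (subexp_Hgrowth L ->
     forall a : R, 1 < a ->
       forall sigma : G -> G -> R[i], cocycle sigma ->
         decaying sigma (fun g => a `^ L g)).
Proof.
move=> _ L_ge0 _; split; last first.
  by move=> hsub a a1 sigma sigma_c; exact: (decaying_of_subexp_Hgrowth L_ge0).
move=> [K [p [K0 p0 hK]]].
have s0_gt0 : 0 < p + 1 by rewrite addr_gt0.
have dec sigma : cocycle sigma -> decaying sigma (fun g => (1 + L g) `^ (p + 1)).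
  by move=> sigma_c; apply: (decaying_of_poly_Hgrowth L_ge0 sigma_c K0 p0 hK).
exists (p + 1); split=> //; split=> // _ sigma sigma_c.
by exists (p + 1); split=> //; exact: dec.
Qed.
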